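(* Let $G$ be a group with finite generating set $Y$ and let $\mathscr S$ be a retractive family of subsets of $Y$ relative to $Y$. Suppose $\bigcup\mathscr S=Y$ and the elements of $\mathscr S$ are pairwise incomparable under inclusion. Suppose (i) $[a,b]=1$ whenever $\{a,b\}\subseteq Y$ is transverse to $\mathscr S$, and (ii) $[a,\langle S\rangle^2]=1$ for every $S\in\mathscr S$ and every $a\in Y-S$, where $\langle S\rangle^2$ is the commutator subgroup of the subgroup $\langle S\rangle\cong G_S$. Then $\rho_{\mathscr S}=\prod_{S\in\mathscr S}\rho_S\colon G\to\prod_{S\in\mathscr S}G_S$ is injective.
   Context: Conventions: $[x,y]=x^{-1}y^{-1}xy$. For $S\subseteq Y$, $G_S$ is the quotient of $G$ by the normal closure of $Y-S$, with projection $\rho_S$. $S$ is retractive if $\rho_S$ restricts to an injection on $\langle S\rangle$ (so $\langle S\rangle$ is identified with $G_S$); a retractive family is a family of retractive subsets all of whose intersections are retractive. A subset $T\subseteq Y$ is transverse to $\mathscr S$ if $T\not\subseteq S$ for every $S\in\mathscr S$. *)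

From mathcomp Require Import all_boot.
Set Implicit Arguments. Unset Strict Implicit. Unset Printing Implicit Defensive.

Record group := Group {
  gcar :> Type;
  gmul : gcar -> gcar -> gcar;
  gone : gcar;
  ginv : gcar -> gcar;
  gmulA : forall x y z, gmul x (gmul y z) = gmul (gmul x y) z;
  gmul1 : forall x, gmul gone x = x;
  gmulr1 : forall x, gmul x gone = x;
  gmulV : forall x, gmul (ginv x) x = gone;
  gmulrV : forall x, gmul x (ginv x) = gone
}.

Section Defs.
Variable G : group.

Definition comm (x y : G) : G :=
  gmul (gmul (gmul (ginv x) (ginv y)) x) y.

Inductive gen (A : G -> Prop) : G -> Prop :=
  | gen_in x : A x -> gen A x
  | gen_one : gen A (gone G)
  | gen_inv x : gen A x -> gen A (ginv x)
  | gen_mul x z : gen A x -> gen A z -> gen A (gmul x z).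

Definition nclosure (A : G -> Prop) : G -> Prop :=
  gen (fun x => exists a g, A a /\ x = gmul (gmul (ginv g) a) g).

Definition derived (H : G -> Prop) : G -> Prop :=
  gen (fun x => exists u v, H u /\ H v /\ x = comm u v).

Variables (I : finType) (y : I -> G).

Definition genS (S : {set I}) : G -> Prop := gen (fun x => exists2 i, i \in S & x = y i).

(* kernel of rho_S : G -> G_S, the normal closure of y(Y - S) *)
Definition kerS (S : {set I}) : G -> Prop :=
  nclosure (fun x => exists2 i, i \notin S & x = y i).

(* rho_S g = rho_S h  <->  g^-1 h in ker rho_S *)
Definition rho_eq (S : {set I}) (g h : G) : Prop := kerS S (gmul (ginv g) h).

Definition retractive (S : {set I}) : Prop :=
  forall g h, genS S g -> genS S h -> rho_eq S g h -> g = h.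

Definition retractive_family (F : {set {set I}}) : Prop :=
  forall F' : {set {set I}}, F' \subset F -> retractive (\bigcap_(S in F') S).

Definition transverse (F : {set {set I}}) (T : {set I}) : Prop :=
  forall S, S \in F -> ~~ (T \subset S).

Definition rho_family_injective (F : {set {set I}}) : Prop :=
  forall g h : G, (forall S, S \in F -> rho_eq S g h) -> g = h.

End Defs.

From mathcomp Require Import all_boot.
Set Implicit Arguments. Unset Strict Implicit. Unset Printing Implicit Defensive.

(* Let x lie in the kernel of every rho_S, S in F.  If H is a normal subgroup
   and a lies in a subgroup of <S>, then a * b with b in H is killed by rho_S only
   if a lies in H: killing the generators outside S replaces b, modulo ker rho_S,
   by some b' in H /\ <S>, so a * b' lies in <S> and is killed by rho_S, whence
   a * b' = 1 by retractivity.  Peeling off the members of F one at a time, this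
   shows first that x lies in [G,G], as G = <S_1> ... <S_k> [G,G] because F
   covers Y, and then that x = 1, as by (i) [G,G] is the product of the
   subgroups <S>^2, which are normal by (ii). *)

Local Notation "x ** y" := (gmul x y) (at level 40, left associativity).
Local Notation "x ^-1" := (ginv x).
Local Notation one := (gone _).

Section GroupLaws.
Variable G : group.
Implicit Types a g u v x z : G.

Lemma mulK x z : x ** z ** z^-1 = x.
Proof. by rewrite -gmulA gmulrV gmulr1. Qed.

Lemma mulVK x z : x ** z^-1 ** z = x.
Proof. by rewrite -gmulA gmulV gmulr1. Qed.

Lemma mul_eq1 x z : x ** z = one -> x = z^-1.
Proof. by move=> xz1; rewrite -(mulK x z) xz1 gmul1. Qed.

Lemma invK x : (x^-1)^-1 = x.
Proof. by rewrite -(mul_eq1 (gmulrV x)). Qed.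

Lemma invM x z : (x ** z)^-1 = z^-1 ** x^-1.
Proof. by apply/esym/mul_eq1; rewrite gmulA mulVK gmulV. Qed.

Lemma inv1 : (gone G)^-1 = one.
Proof. by rewrite -(mul_eq1 (gmul1 one)). Qed.

Lemma invmul_eq1 x z : x^-1 ** z = one -> x = z.
Proof. by move/mul_eq1/(congr1 (@ginv G)); rewrite !invK. Qed.

Definition conj g x := g^-1 ** x ** g.

End GroupLaws.

Ltac gsimpl := rewrite /conj /comm;
  repeat progress rewrite ?invM ?invK ?inv1 ?gmulA ?mulK ?mulVK ?gmulrV ?gmulV ?gmul1 ?gmulr1.

Section Conjugation.
Variable G : group.
Implicit Types a g u v x z : G.

Lemma conj1 x : conj one x = x. Proof. by gsimpl. Qed.
Lemma conjg1 g : conj g one = one. Proof. by gsimpl. Qed.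
Lemma conjMl g h x : conj (g ** h) x = conj h (conj g x). Proof. by gsimpl. Qed.
Lemma conjM g x z : conj g (x ** z) = conj g x ** conj g z. Proof. by gsimpl. Qed.
Lemma conjV g x : conj g x^-1 = (conj g x)^-1. Proof. by gsimpl. Qed.
Lemma conjK g x : conj g^-1 (conj g x) = x. Proof. by gsimpl. Qed.
Lemma conj_comm g u v : conj g (comm u v) = comm (conj g u) (conj g v). Proof. by gsimpl. Qed.
Lemma conjEcomm g x : conj g x = x ** comm x g. Proof. by gsimpl. Qed.

Lemma comm1l v : comm one v = one. Proof. by gsimpl. Qed.
Lemma commVl u v : comm u^-1 v = conj u^-1 (comm u v)^-1. Proof. by gsimpl. Qed.
Lemma commMl u1 u2 v : comm (u1 ** u2) v = conj u2 (comm u1 v) ** comm u2 v. Proof. by gsimpl. Qed.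
Lemma commC u v : comm u v = (comm v u)^-1. Proof. by gsimpl. Qed.

Lemma invM_conj a b : (a ** b)^-1 = a^-1 ** conj a^-1 b^-1. Proof. by gsimpl. Qed.
Lemma mulA_conj a b a' b' : a ** b ** (a' ** b') = a ** a' ** (conj a' b ** b').
Proof. by gsimpl. Qed.

Lemma conj_comm1 g x : comm g x = one -> conj g x = x /\ conj g^-1 x = x.
Proof.
move=> gx1; have xg : conj g x = x.
  have /mul_eq1 xVg : conj g x^-1 ** x = one := gx1.
  by rewrite -[x in conj g x]invK conjV xVg invK.
by split=> //; rewrite -{1}xg conjK.
Qed.

End Conjugation.

Section Subgroups.
Variable G : group.
Implicit Types (A B P N : G -> Prop) (g x : G).

Definition subgroup P :=
  [/\ P one, forall x, P x -> P x^-1 & forall x z, P x -> P z -> P (x ** z)].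

Definition normal P := forall g x, P x -> P (conj g x).

Lemma gen_subgroup A : subgroup (gen A).
Proof. by split; constructor. Qed.

Lemma gen_min A P : subgroup P -> (forall x, A x -> P x) -> forall x, gen A x -> P x.
Proof. by case=> P1 PV PM AP x; elim=> //; auto. Qed.

Lemma gen_morph A B (f : G -> G) :
    f one = one -> (forall x, f x^-1 = (f x)^-1) -> (forall x z, f (x ** z) = f x ** f z) ->
  (forall x, A x -> gen B (f x)) -> forall x, gen A x -> gen B (f x).
Proof.
move=> f1 fV fM fA x; elim=> [u /fA //| |u _ IH|u z _ IHu _ IHz].
- by rewrite f1; constructor.
- by rewrite fV; constructor.
- by rewrite fM; constructor.
Qed.

Lemma gen_normal A : (forall g x, A x -> gen A (conj g x)) -> normal (gen A).
Proof.
by move=> Aconj g; apply: gen_morph; [exact: conjg1|exact: conjV|exact: conjM|exact: Aconj].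
Qed.

Lemma normal_of_comm P : subgroup P -> (forall x g, P x -> P (comm x g)) -> normal P.
Proof. by case=> _ _ PM Pcomm g x Px; rewrite conjEcomm; apply: PM => //; apply: Pcomm. Qed.

Lemma gen_join_normal A B : subgroup A -> subgroup B -> normal B ->
  forall x, gen (fun x => A x \/ B x) x -> exists a b, [/\ A a, B b & x = a ** b].
Proof.
case=> A1 AV AM [B1 BV BM] nB x; elim.
- by move=> u [Au|Bu]; [exists u, one | exists one, u]; rewrite ?gmulr1 ?gmul1.
- by exists one, one; rewrite gmulr1.
- move=> u _ [a [b [Aa Bb ->]]].
  by exists a^-1, (conj a^-1 b^-1); rewrite invM_conj; split; auto.
- move=> u z _ [a [b [Aa Bb ->]]] _ [a' [b' [Aa' Bb' ->]]].
  by exists (a ** a'), (conj a' b ** b'); rewrite mulA_conj; split; auto.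
Qed.

Lemma comm_gen_l N B v : subgroup N -> normal N ->
  (forall a, B a -> N (comm a v)) -> forall u, gen B u -> N (comm u v).
Proof.
case=> N1 NV NM nN NB u; elim=> [a /NB //| |u' _ IH|u1 u2 _ IH1 _ IH2].
- by rewrite comm1l.
- by rewrite commVl; apply/nN/NV.
- by rewrite commMl; apply: NM => //; apply: nN.
Qed.

Lemma derived_conj P c x : subgroup P -> P c -> derived P x -> derived P (conj c x).
Proof.
case=> _ PV PM Pc; apply: gen_morph; [exact: conjg1|exact: conjV|exact: conjM|].
have Pconj u : P u -> P (conj c u) by move=> Pu; apply: PM (PM _ _ (PV _ Pc) Pu) Pc.
move=> _ [u [v [Pu [Pv ->]]]]; rewrite conj_comm; apply: gen_in.
by exists (conj c u), (conj c v); auto.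
Qed.

End Subgroups.

Section Retraction.
Variables (G : group) (I : finType) (y : I -> G).
Implicit Types (S T : {set I}) (P W : G -> Prop) (x z : G).

Lemma kerS_normal S : normal (kerS y S).
Proof.
apply: gen_normal => g _ [a [h [Sa ->]]]; apply: gen_in.
by exists a, (h ** g); split=> //; exact: esym (conjMl h g a).
Qed.

Lemma kerS_gen S i : i \notin S -> kerS y S (y i).
Proof.
move=> iS; apply: gen_in; exists (y i), one.
by split; [exists i | rewrite -[RHS]/(conj one _) conj1].
Qed.

Lemma rho_eq_refl S x : rho_eq y S x x.
Proof. by rewrite /rho_eq gmulV; apply: gen_one. Qed.

Lemma rho_eq_sym S x z : rho_eq y S x z -> rho_eq y S z x.
Proof. by move/gen_inv; rewrite /rho_eq invM invK. Qed.

Lemma rho_eq_trans S x z w : rho_eq y S x z -> rho_eq y S z w -> rho_eq y S x w.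
Proof. by move=> xz zw; have := gen_mul xz zw; rewrite -gmulA (gmulA z) gmulrV gmul1. Qed.

Lemma rho_eq_mul S x z x' z' :
  rho_eq y S x x' -> rho_eq y S z z' -> rho_eq y S (x ** z) (x' ** z').
Proof.
move=> xx' zz'; rewrite /rho_eq.
suff -> : (x ** z)^-1 ** (x' ** z') = conj z (x^-1 ** x') ** (z^-1 ** z').
  by apply: gen_mul => //; apply: kerS_normal.
by gsimpl.
Qed.

Lemma rho_eq_inv S x x' : rho_eq y S x x' -> rho_eq y S x^-1 x'^-1.
Proof.
rewrite /rho_eq => /gen_inv/(kerS_normal x^-1).
by congr (kerS y S); gsimpl.
Qed.

Lemma rho_eq_comm S u v u' v' :
  rho_eq y S u u' -> rho_eq y S v v' -> rho_eq y S (comm u v) (comm u' v').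
Proof.
by move=> uu' vv'; do 3?apply: rho_eq_mul => //; apply: rho_eq_inv.
Qed.

Lemma genS_comm T u v : genS y T u -> genS y T v -> genS y T (comm u v).
Proof. by move=> Tu Tv; do 3?apply: gen_mul => //; apply: gen_inv. Qed.

Lemma derived_genS_sub T x : derived (genS y T) x -> genS y T x.
Proof.
by apply: gen_min; [exact: gen_subgroup | move=> _ [u [v [Tu [Tv ->]]]]; apply: genS_comm].
Qed.

Definition reduces S P x := exists x', [/\ P x', genS y S x' & rho_eq y S x' x].

Lemma reduces_sub S P Q x : (forall z, P z -> Q z) -> reduces S P x -> reduces S Q x.
Proof. by move=> PQ [x' [/PQ Qx' Sx' x'x]]; exists x'. Qed.

Lemma gen_reduces S (A P : G -> Prop) : subgroup P -> (forall x, A x -> reduces S P x) ->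
  forall x, gen A x -> reduces S P x.
Proof.
case=> P1 PV PM AP x; elim=> [u /AP //| |u _ [u' [Pu' Su' u'u]]|].
- by exists one; split; [|exact: gen_one|exact: rho_eq_refl].
- by exists u'^-1; split; [exact: PV|exact: gen_inv|exact: rho_eq_inv].
- move=> u z _ [u' [Pu' Su' u'u]] _ [z' [Pz' Sz' z'z]].
  by exists (u' ** z'); split; [exact: PM|exact: gen_mul|exact: rho_eq_mul].
Qed.

Lemma genS_reduces S T x : genS y T x -> reduces S (genS y T) x.
Proof.
apply: gen_reduces; first exact: gen_subgroup.
move=> _ [i Ti ->]; have [iS | iNS] := boolP (i \in S).
- by exists (y i); split; [apply: gen_in; exists i..|exact: rho_eq_refl].
- exists one; split; [exact: gen_one|exact: gen_one|].
  by rewrite /rho_eq inv1 gmul1; apply: kerS_gen.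
Qed.

Lemma derived_reduces S T x : derived (genS y T) x -> reduces S (derived (genS y T)) x.
Proof.
apply: gen_reduces; first exact: gen_subgroup.
move=> _ [u [v [Tu [Tv ->]]]].
have [u' [Tu' Su' u'u]] := genS_reduces S Tu; have [v' [Tv' Sv' v'v]] := genS_reduces S Tv.
exists (comm u' v'); split; [|exact: genS_comm|exact: rho_eq_comm].
by apply: gen_in; exists u', v'.
Qed.

Fixpoint join_seq (A : {set I} -> G -> Prop) W (l : seq {set I}) : G -> Prop :=
  if l is T :: l' then gen (fun x => A T x \/ join_seq A W l' x) else W.

Lemma join_seq_subgroup A W l : subgroup W -> subgroup (join_seq A W l).
Proof. by case: l => [//|T l] _; apply: gen_subgroup. Qed.

Lemma join_seq_mem A W l T x : T \in l -> A T x -> join_seq A W l x.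
Proof.
elim: l => [//|T' l IH]; rewrite in_cons => /orP[/eqP<- | Tl] Ax; apply: gen_in; first by left.
by right; apply: IH.
Qed.

Lemma join_seq_base A W l x : W x -> join_seq A W l x.
Proof. by elim: l => [//|T l IH] Wx; apply: gen_in; right; apply: IH. Qed.

Lemma join_seq_normal A W l :
  normal W -> (forall T, T \in l -> normal (A T)) -> normal (join_seq A W l).
Proof.
elim: l => [//|T l IH] nW nA; apply: gen_normal => g x [Ax|Jx]; apply: gen_in.
  by left; apply: nA; rewrite ?mem_head.
by right; apply: IH => // T' T'l; apply: nA; rewrite in_cons T'l orbT.
Qed.

Section Elimination.
Variables (F : {set {set I}}) (A : {set I} -> G -> Prop) (W : G -> Prop).
Hypotheses (retractive_F : forall S, S \in F -> retractive y S)
  (subgroup_W : subgroup W) (subgroup_A : forall S, subgroup (A S))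
  (A_genS : forall S, S \in F -> forall a, A S a -> genS y S a)
  (normal_join : forall l, {subset l <= F} -> normal (join_seq A W l))
  (A_reduces : forall S T x, A T x -> reduces S (A T) x)
  (W_reduces : forall S x, W x -> reduces S W x).

Lemma join_seq_reduces S l x : join_seq A W l x -> reduces S (join_seq A W l) x.
Proof.
elim: l x => [|T l IH]; first exact: W_reduces.
apply: gen_reduces; first exact: gen_subgroup.
move=> x [/(A_reduces S)|/IH]; apply: reduces_sub => z Jz; apply: gen_in; auto.
Qed.

Lemma join_seq_cons_ker S l x : S \in F -> {subset l <= F} ->
  join_seq A W (S :: l) x -> kerS y S x -> join_seq A W l x.
Proof.
move=> SF lF Jx; have [_ JV JM] := join_seq_subgroup A l subgroup_W.
have [a [b [Aa Jb ->]]] :=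
  gen_join_normal (subgroup_A S) (join_seq_subgroup A l subgroup_W) (normal_join lF) Jx.
have [b' [Jb' Sb' b'b]] := join_seq_reduces S Jb.
move=> ab_ker; have ab_one : rho_eq y S one (a ** b) by rewrite /rho_eq inv1 gmul1.
have ab'_one : rho_eq y S one (a ** b').
  by apply: rho_eq_trans ab_one (rho_eq_sym _); apply: rho_eq_mul b'b; apply: rho_eq_refl.
have /esym/mul_eq1 -> := retractive_F SF (gen_one _) (gen_mul (A_genS SF Aa) Sb') ab'_one.
by apply: JM => //; apply: JV.
Qed.

Lemma join_seq_kernels l x : {subset l <= F} ->
  join_seq A W l x -> (forall S, S \in F -> kerS y S x) -> W x.
Proof.
elim: l => [//|S l IH] Sl_F Jx Kx.
have lF : {subset l <= F} by move=> T Tl; apply: Sl_F; rewrite in_cons Tl orbT.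
have SF : S \in F by apply: Sl_F; rewrite mem_head.
by apply: IH => //; apply: join_seq_cons_ker SF lF Jx (Kx S SF).
Qed.

End Elimination.

End Retraction.

Section Family.
Variables (G : group) (I : finType) (y : I -> G) (F : {set {set I}}).
Hypotheses (gen_all : forall g : G, genS y [set: I] g)
  (retractive_F : forall S, S \in F -> retractive y S).

Lemma normal_by_gens P :
  (forall i x, P x -> P (conj (y i) x) /\ P (conj (y i)^-1 x)) -> normal P.
Proof.
move=> Pgens g.
suff Pg : forall x, P x -> P (conj g x) /\ P (conj g^-1 x) by move=> x /Pg[].
elim: (gen_all g) => [_ [i _ ->]| |u _ IH|u z _ IHu _ IHz] x Px.
- exact: Pgens.
- by rewrite inv1 conj1.
- by rewrite invK; case: (IH x Px).
- rewrite invM !conjMl; split.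
  + by case: (IHz _ (proj1 (IHu _ Px))).
  + by case: (IHu _ (proj2 (IHz _ Px))).
Qed.

Lemma derived_sub_normal N : subgroup N -> normal N ->
  (forall a b, N (comm (y a) (y b))) -> forall x, derived (genS y [set: I]) x -> N x.
Proof.
move=> subN nN Nab; apply: gen_min => // _ [u [v [_ [_ ->]]]].
have [_ NV _] := subN.
apply: (comm_gen_l subN nN _ (gen_all u)) => _ [a _ ->]; rewrite commC; apply: NV.
by apply: (comm_gen_l subN nN _ (gen_all v)) => _ [b _ ->].
Qed.

Lemma derived_genS_normal (S : {set I}) :
    (forall a, a \notin S -> forall x, derived (genS y S) x -> comm (y a) x = one) ->
  normal (derived (genS y S)).
Proof.
move=> comm_out; apply: normal_by_gens => i x Sx.
have [iS | iNS] := boolP (i \in S); last by have [-> ->] := conj_comm1 (comm_out _ iNS _ Sx).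
have Syi : genS y S (y i) by apply: gen_in; exists i.
by split; apply: derived_conj => //; [exact: gen_subgroup | exact: gen_subgroup | exact: gen_inv].
Qed.

Lemma kernels_sub_derived x : \bigcup_(S in F) S = [set: I] ->
  (forall S, S \in F -> kerS y S x) -> derived (genS y [set: I]) x.
Proof.
move=> cover Kx; have FF : {subset enum F <= F} by move=> S; rewrite mem_enum.
have subJ l : subgroup (join_seq (genS y) (derived (genS y [set: I])) l).
  exact/join_seq_subgroup/gen_subgroup.
apply: (join_seq_kernels (A := genS y) retractive_F (gen_subgroup _) _ _ _ _ _ FF _ Kx) => //.
- by move=> S; apply: gen_subgroup.
- move=> l _; apply: normal_of_comm => // u g _; apply: join_seq_base.
  by apply: gen_in; exists u, g; split; [exact: gen_all | split].
- by move=> S T z; apply: genS_reduces.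
- by move=> S z; apply: derived_reduces.
apply: gen_min (gen_all x) => // _ [i _ ->].
have /bigcupP[S SF iS] : i \in \bigcup_(S in F) S by rewrite cover.
have SF' : S \in enum F by rewrite mem_enum.
by apply: join_seq_mem SF' _; apply: gen_in; exists i.
Qed.

Lemma derived_kernels_trivial x :
    (forall a b, transverse F [set a; b] -> comm (y a) (y b) = one) ->
    (forall S a, S \in F -> a \notin S ->
       forall z, derived (genS y S) z -> comm (y a) z = one) ->
  derived (genS y [set: I]) x -> (forall S, S \in F -> kerS y S x) -> x = one.
Proof.
move=> comm_transverse comm_derived Dx Kx; pose W z := z = gone G.
have FF : {subset enum F <= F} by move=> S; rewrite mem_enum.
have subW : subgroup W by split=> [|_ ->|_ _ -> ->]; rewrite /W ?inv1 ?gmul1.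
pose J := join_seq (fun S => derived (genS y S)) W.
have nJ l : {subset l <= F} -> normal (J l).
  move=> lF; apply: join_seq_normal => [g _ ->|T /lF TF]; first exact: conjg1.
  by apply: derived_genS_normal => a; apply: comm_derived.
apply: (join_seq_kernels retractive_F subW _ _ nJ _ _ FF _ Kx).
- by move=> S; apply: gen_subgroup.
- by move=> S _ z; apply: derived_genS_sub.
- by move=> S T z; apply: derived_reduces.
- by move=> S _ ->; exists one; split; [| exact: gen_one | exact: rho_eq_refl].
apply: derived_sub_normal Dx; [exact: join_seq_subgroup | exact: nJ |] => a b.
have [/existsP[S /andP[SF abS]] | noS] := boolP [exists S in F, [set a; b] \subset S].
  have SF' : S \in enum F by rewrite mem_enum.
  apply: join_seq_mem SF' _; apply: gen_in; exists (y a), (y b); split; last split => //.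
    by apply: gen_in; exists a => //; apply: (subsetP abS); rewrite set21.
  by apply: gen_in; exists b => //; apply: (subsetP abS); rewrite set22.
have [J1 _ _] : subgroup (J (enum F)) by apply: join_seq_subgroup.
rewrite comm_transverse // => S SF; apply/negP => abS.
by case/negP: noS; apply/existsP; exists S; rewrite SF.
Qed.

End Family.

Lemma retractive_family_mem (G : group) (I : finType) (y : I -> G) F S :
  retractive_family y F -> S \in F -> retractive y S.
Proof. by move=> retF SF; have := retF [set S]; rewrite sub1set big_set1; apply. Qed.

Theorem mainTheorem8 (G : group) (I : finType) (y : I -> G)
  (F : {set {set I}}) :
  injective y ->
  (forall g : G, genS y [set: I] g) ->
  retractive_family y F ->
  \bigcup_(S in F) S = [set: I] ->
  (forall S1 S2, S1 \in F -> S2 \in F -> S1 \subset S2 -> S1 = S2) ->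
  (forall a b : I, transverse F [set a; b] -> comm (y a) (y b) = gone G) ->
  (forall S a, S \in F -> a \notin S ->
     forall x, derived (genS y S) x -> comm (y a) x = gone G) ->
  rho_family_injective y F.
Proof.
move=> _ gen_all retF cover _ comm_transverse comm_derived g h rho_gh.
have retractive_F S : S \in F -> retractive y S by apply: retractive_family_mem.
apply: invmul_eq1; apply: (derived_kernels_trivial gen_all retractive_F) => //.
exact: (kernels_sub_derived gen_all retractive_F cover rho_gh).
Qed.
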